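(* Under the setting described in the context, let $\mathcal{K}$ be an arbitrary set of policies. Then \[ M_{1}\cap \mathcal{K}\subseteq \Pi (M_{2}\cap \mathcal{K})\subseteq M_{1}\cap \Pi (\mathcal{K})\subseteq M_{1}. \] In particular, taking $\mathcal{K}$ to be the set of all policies, $\Pi(M_2)=M_1$.
   Context: Let $T\ge 2$, $M\ge 1$ and $n_1,\dots,n_T\ge 1$ be integers. Let $\xi=(\xi_1,\dots,\xi_T)$ be a random vector with values in $\mathbb{R}^{MT}$, $\xi_t\in\mathbb{R}^M$, defined on a probability space $(\Omega,\mathcal{A},\mathbb{P})$, and write $\xi_{1:t}:=(\xi_1,\dots,\xi_t)$. A policy is a tuple $y=(y_t)_{t=1}^T$ where $y_1\in\mathbb{R}^{n_1}$ is deterministic and, for $t\ge 2$, $y_t:\mathbb{R}^{M(t-1)}\to\mathbb{R}^{n_t}$ is Borel measurable; $y_t$ is evaluated at $\xi_{1:t-1}$ (with $y_1(\xi_{1:0}):=y_1$). For $t=1,\dots,T$, $\tau=1,\dots,t$ and $k\in\{2,3\}$ let $A^{(k)}_{t,\tau}$, $B^{(k)}_{t,\tau}$ be given real matrices and $b^{(k)}_t$ given vectors of compatible sizes, with $B^{(3)}_{t,t}=0$ for all $t$. Fix $p\in(0,1]$. Define $M_1$ = set of policies $y$ such that (i) $\mathbb{P}\big(\sum_{\tau=1}^t A^{(2)}_{t,\tau}y_\tau(\xi_{1:\tau-1})+\sum_{\tau=1}^t B^{(2)}_{t,\tau}\xi_\tau\le b^{(2)}_t,\ t=1,\dots,T\big)\ge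 p$ and (ii) $\sum_{\tau=1}^t A^{(3)}_{t,\tau}y_\tau(\xi_{1:\tau-1})+\sum_{\tau=1}^{t-1} B^{(3)}_{t,\tau}\xi_\tau\le b^{(3)}_t$ for $t=1,\dots,T$, $\mathbb{P}$-almost surely; $M_2$ = set of policies $y$ such that $\mathbb{P}\big(\text{for all } t=1,\dots,T:\ \sum_{\tau=1}^t A^{(2)}_{t,\tau}y_\tau(\xi_{1:\tau-1})+\sum_{\tau=1}^t B^{(2)}_{t,\tau}\xi_\tau\le b^{(2)}_t \text{ and } \sum_{\tau=1}^t A^{(3)}_{t,\tau}y_\tau(\xi_{1:\tau-1})+\sum_{\tau=1}^{t-1} B^{(3)}_{t,\tau}\xi_\tau\le b^{(3)}_t\big)\ge p$. For vectors $z_1,\dots,z_{t-1}$ ($z_\tau\in\mathbb{R}^{n_\tau}$) and $\xi_{1:t-1}$ let $X_t(z_{1:t-1},\xi_{1:t-1}):=\{u\in\mathbb{R}^{n_t}: A^{(3)}_{t,t}u\le b^{(3)}_t-\sum_{\tau=1}^{t-1}B^{(3)}_{t,\tau}\xi_\tau-\sum_{\tau=1}^{t-1}A^{(3)}_{t,\tau}z_\tau\}$; it is assumed that all these polyhedra are nonempty, so the Euclidean projection $\pi_{X}$ onto each of them is well defined. The operator $\Pi$ maps a policy $y$ to $z=\Pi(y)$ defined recursively by $z_1:=\pi_{X_1}(y_1)$ and $z_t(\xi_{1:t-1}):=\pi_{X_t(z_1,z_2(\xi_1),\dots,z_{t-1}(\xi_{1:t-2}),\xi_{1:t-1})}(y_t(\xi_{1:t-1}))$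 for every $\xi_{1:t-1}$ and $t=2,\dots,T$; it is assumed that $\Pi(y)$ is again a policy (Borel measurable). For a set $\mathcal{K}$ of policies, $\Pi(\mathcal{K}):=\{\Pi(y):y\in\mathcal{K}\}$. *)

From Stdlib Require Import Reals ClassicalEpsilon.
From mathcomp Require Import all_boot.
Set Implicit Arguments. Unset Strict Implicit. Unset Printing Implicit Defensive.
Local Open Scope R_scope.

Definition vec (n : nat) := 'I_n -> R.
Definition mat (m n : nat) := 'I_m -> 'I_n -> R.

Definition mv (m n : nat) (A : mat m n) (u : vec n) : vec m :=
  fun i => \big[Rplus/R0]_(j < n) (A i j * u j).
Definition vle (m : nat) (u v : vec m) : Prop := forall i, u i <= v i.
Definition vplus (m : nat) (u v : vec m) : vec m := fun i => u i + v i.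
Definition vzero (m : nat) : vec m := fun _ => R0.
Definition vsum (m : nat) (lo hi : nat) (f : nat -> vec m) : vec m :=
  fun i => \big[Rplus/R0]_(lo <= tau < hi) f tau i.
Definition sqdist (n : nat) (u v : vec n) : R :=
  \big[Rplus/R0]_(j < n) ((u j - v j) * (u j - v j)).

Definition ext (k : nat) (x : vec k) (i : nat) : R :=
  match insub i with Some j => x j | None => R0 end.
Definition restr (k : nat) (s : nat -> R) : vec k := fun j => s (nat_of_ord j).
Definition trunc (k : nat) (s : nat -> R) : nat -> R :=
  fun i => if (i < k)%N then s i else R0.

(* xi = (xi_1,...,xi_T) in R^{MT}, flattened: component k of xi_tau sits
   at index M*(tau-1)+k.  The history xi_{1:t} is the first M*t entries. *)
Definition hist (M t : nat) (s : nat -> R) : vec (M * t)%N := @restr (M * t)%N s.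
Definition blk (M tau : nat) (s : nat -> R) : vec M :=
  fun k => s (M * (tau - 1)%N + nat_of_ord k)%N.

Definition is_sigma_algebra (Omega : Type) (F : (Omega -> Prop) -> Prop) : Prop :=
  F (fun _ => True) /\
  (forall A, F A -> F (fun w => ~ A w)) /\
  (forall An : nat -> Omega -> Prop, (forall k, F (An k)) ->
     F (fun w => exists k, An k w)).

Definition is_probability (Omega : Type) (F : (Omega -> Prop) -> Prop)
  (P : (Omega -> Prop) -> R) : Prop :=
  is_sigma_algebra F /\
  P (fun _ => True) = 1 /\
  (forall A, F A -> 0 <= P A) /\
  (forall An : nat -> Omega -> Prop,
     (forall k, F (An k)) ->
     (forall k l w, k <> l -> An k w -> An l w -> False) ->
     infinite_sum (fun k => P (An k)) (P (fun w => exists k, An k w))).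

Definition borel (n : nat) (B : vec n -> Prop) : Prop :=
  forall S : (vec n -> Prop) -> Prop, is_sigma_algebra S ->
    (forall (i : 'I_n) (a : R), S (fun x => x i <= a)) -> S B.

Definition borel_measurable (k m : nat) (f : vec k -> vec m) : Prop :=
  forall B, borel B -> borel (fun x => B (f x)).

Definition random_vector (Omega : Type) (F : (Omega -> Prop) -> Prop)
  (d : nat) (X : Omega -> vec d) : Prop :=
  forall B, borel B -> F (fun w => B (X w)).

Definition almost_surely (Omega : Type) (F : (Omega -> Prop) -> Prop)
  (P : (Omega -> Prop) -> R) (Q : Omega -> Prop) : Prop :=
  exists N, F N /\ P N = 0 /\ forall w, ~ N w -> Q w.

Record Data (M : nat) (n : nat -> nat) := {
  m2 : nat -> nat;
  m3 : nat -> nat;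
  A2 : forall t tau : nat, mat (m2 t) (n tau);
  B2 : forall t tau : nat, mat (m2 t) M;
  b2 : forall t : nat, vec (m2 t);
  A3 : forall t tau : nat, mat (m3 t) (n tau);
  B3 : forall t tau : nat, mat (m3 t) M;
  b3 : forall t : nat, vec (m3 t) }.
Arguments m2 {M n} d t.  Arguments m3 {M n} d t.
Arguments A2 {M n} d t tau _ _.  Arguments B2 {M n} d t tau _ _.
Arguments b2 {M n} d t _.  Arguments A3 {M n} d t tau _ _.
Arguments B3 {M n} d t tau _ _.  Arguments b3 {M n} d t _.

(* A policy: y t : R^{M(t-1)} -> R^{n_t}, evaluated at xi_{1:t-1};
   y 1 is a function on R^0, i.e. a deterministic vector.  Only t = 1..T
   is relevant. *)
Definition policy_t (M : nat) (n : nat -> nat) :=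
  forall t : nat, vec (M * (t - 1)%N)%N -> vec (n t).

Definition is_policy (T M : nat) (n : nat -> nat) (y : policy_t M n) : Prop :=
  forall t, (1 <= t <= T)%N -> borel_measurable (y t).

Definition yval M n (y : policy_t M n) (tau : nat) (s : nat -> R) : vec (n tau) :=
  y tau (@hist M (tau - 1)%N s).
Arguments yval {M n} y tau s _.

Definition C2 (T M : nat) n (D : Data M n) (y : policy_t M n) (s : nat -> R) : Prop :=
  forall t, (1 <= t <= T)%N ->
    vle (vplus (vsum 1 t.+1 (fun tau => mv (A2 D t tau) (yval y tau s)))
               (vsum 1 t.+1 (fun tau => mv (B2 D t tau) (@blk M tau s))))
        (b2 D t).

Definition C3 (T M : nat) n (D : Data M n) (y : policy_t M n) (s : nat -> R) : Prop :=
  forall t, (1 <= t <= T)%N ->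
    vle (vplus (vsum 1 t.+1 (fun tau => mv (A3 D t tau) (yval y tau s)))
               (vsum 1 t (fun tau => mv (B3 D t tau) (@blk M tau s))))
        (b3 D t).

Section Sets.
Variables (T M : nat) (n : nat -> nat) (D : Data M n).
Variables (Omega : Type) (F : (Omega -> Prop) -> Prop) (P : (Omega -> Prop) -> R).
Variable (xi : Omega -> vec (M * T)%N).
Variable (p : R).

Definition sample (w : Omega) : nat -> R := ext (xi w).

Definition M1 (y : policy_t M n) : Prop :=
  is_policy T y /\
  P (fun w => C2 T D y (sample w)) >= p /\
  almost_surely F P (fun w => C3 T D y (sample w)).

Definition M2 (y : policy_t M n) : Prop :=
  is_policy T y /\
  P (fun w => C2 T D y (sample w) /\ C3 T D y (sample w)) >= p.

Definition ae_eq (y y' : policy_t M n) : Prop :=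
  almost_surely F P (fun w => forall t, (1 <= t <= T)%N ->
     forall i, yval y t (sample w) i = yval y' t (sample w) i).
End Sets.

Definition is_proj (k : nat) (X : vec k -> Prop) (u z : vec k) : Prop :=
  X z /\ forall w, X w -> sqdist u z <= sqdist u w.

Definition proj (k : nat) (X : vec k -> Prop) (u : vec k) : vec k :=
  epsilon (inhabits u) (fun z => is_proj X u z).

(* X_t(z_{1:t-1}, xi_{1:t-1}), where zs tau : vec (n tau) gives z_tau
   and h is the (0-extended) history *)
Definition Xset M n (D : Data M n) (t : nat) (zs : forall tau, vec (n tau))
  (h : nat -> R) : vec (n t) -> Prop :=
  fun u => vle (mv (A3 D t t) u)
     (fun i => b3 D t i
        - vsum 1 t (fun tau => mv (B3 D t tau) (@blk M tau h)) i
        - vsum 1 t (fun tau => mv (A3 D t tau) (zs tau)) i).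

Arguments Xset {M n} D t zs h _.

(* PiRec t tau h = z_tau(h_{1:tau-1}) for tau <= t (the recursion of Pi),
   as 0-extended sequences; h is a 0-extended history. *)
Fixpoint PiRec M n (D : Data M n) (y : policy_t M n) (t : nat)
  : nat -> (nat -> R) -> nat -> R :=
  match t with
  | 0 => fun _ _ _ => R0
  | S t' => fun tau h =>
      if (tau <= t')%N then PiRec D y t' tau h
      else (* tau = t = t'+1 : projection onto X_t *)
        ext (proj (Xset D t
                  (fun tau' => @restr (n tau')
                     (PiRec D y t' tau' (trunc (M * (tau' - 1))%N h)))
                  (trunc (M * t')%N h))
                (y t (@hist M (t - 1)%N h)))
  end.

Definition Pi M n (D : Data M n) (y : policy_t M n) : policy_t M n :=
  fun t (h : vec (M * (t - 1)%N)%N) => @restr (n t) (PiRec D y t t (ext h)).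

From HB Require Import structures.
From Stdlib Require Import Reals Lra Lia ClassicalEpsilon FunctionalExtensionality PropExtensionality Classical.
From mathcomp Require Import all_boot.
Local Open Scope R_scope.

(* A policy that already satisfies the constraints (3) is left unchanged by Pi,
   because at every stage its decision lies in the polyhedron X_t onto which it
   is projected; by induction over the stages, Pi y agrees with y on every sample
   where y satisfies (3).  Conversely Pi y satisfies (3) on every sample, since a
   Euclidean projection onto a nonempty polyhedron exists (a minimizing sequence
   is Cauchy by the parallelogram law, and polyhedra are closed and convex).
   Hence a policy of M1 lies in M2 and is almost surely equal to its projection,
   while the projection of a policy y of M2 satisfies (2) at least on the event
   where y satisfies (2) and (3), which has probability at least p. *)

Lemma Rplus_associative : associative Rplus.
Proof. by move=> *; rewrite Rplus_assoc. Qed.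
HB.instance Definition _ :=
  Monoid.isComLaw.Build R R0 Rplus Rplus_associative Rplus_comm Rplus_0_l.

Lemma big_lin {k} (f g : 'I_k -> R) a b :
  \big[Rplus/R0]_(i < k) (a * f i + b * g i) =
  a * \big[Rplus/R0]_(i < k) f i + b * \big[Rplus/R0]_(i < k) g i.
Proof.
by apply: (big_rec3 (fun s s1 s2 => s = a * s1 + b * s2)) => [|i s s1 s2 _ ->]; ring.
Qed.

Lemma big_ge0 {I : Type} (r : seq I) (P : pred I) (f : I -> R) :
  (forall i, 0 <= f i) -> 0 <= \big[Rplus/R0]_(i <- r | P i) f i.
Proof.
move=> H; elim: r => [|x r IH]; first by rewrite big_nil; lra.
by rewrite big_cons; case: (P x) => //; have := H x; lra.
Qed.

Lemma le_big_term {I : finType} (f : I -> R) i0 :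
  (forall i, 0 <= f i) -> f i0 <= \big[Rplus/R0]_i f i.
Proof.
move=> H; rewrite (bigD1 i0) //=.
by have := big_ge0 (index_enum I) (fun i => i != i0) f H; lra.
Qed.

Lemma archimed_inv {x : R} : 0 < x -> exists k : nat, / INR k.+1 < x.
Proof.
move=> Hx; case: (INR_unbounded (/ x)) => k Hk; exists k.
have H1 : INR k < INR k.+1 by apply: lt_INR; lia.
have H0 : 0 < / x by apply: Rinv_0_lt_compat.
rewrite -(Rinv_inv x); apply: Rinv_lt_contravar; nra.
Qed.

Lemma inv_INR_pos k : 0 < / INR k.+1.
Proof. by apply: Rinv_0_lt_compat; apply: lt_0_INR; lia. Qed.

Lemma inv_INR_le {k l} : (k <= l)%coq_nat -> / INR l.+1 <= / INR k.+1.
Proof.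
move=> H; apply: Rinv_le_contravar; first by apply: lt_0_INR; lia.
by apply: le_INR; lia.
Qed.

Lemma cv_inv_INR : Un_cv (fun k => / INR k.+1) 0.
Proof.
move=> e He; case: (archimed_inv He) => N HN; exists N => k Hk.
have := inv_INR_le Hk; have := inv_INR_pos k => Hpos Hle.
by rewrite /Rdist Rminus_0_r Rabs_right; lra.
Qed.

Lemma cv_ext {u v : nat -> R} {l} : Un_cv u l -> (forall k, u k = v k) -> Un_cv v l.
Proof. by move=> H E e He; case: (H e He) => N HN; exists N => k Hk; rewrite -E; apply: HN. Qed.

Lemma cv_cst (c : R) : Un_cv (fun _ => c) c.
Proof. by move=> e He; exists 0%N => k _; rewrite /Rdist Rminus_diag Rabs_R0. Qed.

Lemma cv_big {I : Type} (r : seq I) (P : pred I) (G : I -> nat -> R) (L : I -> R) :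
  (forall i, Un_cv (G i) (L i)) ->
  Un_cv (fun k => \big[Rplus/R0]_(i <- r | P i) G i k) (\big[Rplus/R0]_(i <- r | P i) L i).
Proof.
move=> H; elim: r => [|x r IH].
  by rewrite big_nil; apply: (cv_ext (cv_cst 0)) => k; rewrite big_nil.
rewrite big_cons; case Px: (P x).
  by apply: (cv_ext (CV_plus _ _ _ _ (H x) IH)) => k; rewrite big_cons Px.
by apply: (cv_ext IH) => k; rewrite big_cons Px.
Qed.

(** * Euclidean projection onto a polyhedron *)

Lemma sqdist_ge0 {k} (u v : vec k) : 0 <= sqdist u v.
Proof. by apply: big_ge0 => j; apply: Rle_0_sqr. Qed.

Lemma sqdist_coord {k} (u v : vec k) j : (u j - v j) * (u j - v j) <= sqdist u v.
Proof. by apply: (le_big_term (fun j => (u j - v j) * (u j - v j))) => i; apply: Rle_0_sqr. Qed.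

Lemma sqdist_xx {k} (u : vec k) : sqdist u u = 0.
Proof.
rewrite /sqdist (eq_bigr (fun _ => 0 * 0 + 0 * 0)); last by move=> j _; ring.
by rewrite big_lin; ring.
Qed.

Lemma sqdist_parallelogram {k} (u x y : vec k) :
  sqdist x y = 2 * sqdist u x + 2 * sqdist u y - 4 * sqdist u (fun j => (x j + y j) / 2).
Proof.
rewrite [sqdist x y](eq_bigr (fun j => 1 * (2 * ((u j - x j) * (u j - x j))
    + 2 * ((u j - y j) * (u j - y j))) + (- 4) * ((u j - (x j + y j) / 2) * (u j - (x j + y j) / 2)))).
  by rewrite !big_lin /sqdist; ring.
by move=> j _; field.
Qed.

Lemma cv_sqdist {k} (u : vec k) {zs : nat -> vec k} {z} :
  (forall j, Un_cv (fun m => zs m j) (z j)) -> Un_cv (fun m => sqdist u (zs m)) (sqdist u z).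
Proof.
move=> Hz; apply: cv_big => j.
by apply: CV_mult; apply: CV_minus => //; apply: cv_cst.
Qed.

Section Projection.
Variables (k : nat) (X : vec k -> Prop) (u : vec k).
Hypothesis X_nonempty : exists x, X x.
Hypothesis X_midpoint : forall {x y}, X x -> X y -> X (fun j => (x j + y j) / 2).
Hypothesis X_closed : forall (zs : nat -> vec k) z,
  (forall m, X (zs m)) -> (forall j, Un_cv (fun m => zs m j) (z j)) -> X z.

Lemma minimizing_sequence : exists d (zs : nat -> vec k),
  (forall x, X x -> d <= sqdist u x) /\
  (forall m, X (zs m) /\ sqdist u (zs m) < d + / INR m.+1).
Proof.
pose E r := exists x, X x /\ r = - sqdist u x.
have Hb : bound E by exists 0 => r [x [_ ->]]; have := sqdist_ge0 u x; lra.
have HE : exists r, E r by case: X_nonempty => x Hx; exists (- sqdist u x), x.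
case: (completeness E Hb HE) => l [Hub Hlub].
have Hlow : forall x, X x -> - l <= sqdist u x.
  by move=> x Hx; have := Hub _ (ex_intro _ x (conj Hx erefl)); lra.
have Happrox : forall m, exists x, X x /\ sqdist u x < - l + / INR m.+1.
  move=> m; apply: NNPP => hn.
  suff /Hlub : is_upper_bound E (l - / INR m.+1) by have := inv_INR_pos m; lra.
  move=> r [x [Hx ->]]; apply: Rnot_lt_le => h; apply: hn; exists x; split=> //; lra.
have [zs Hzs] := choice _ Happrox.
by exists (- l), zs.
Qed.

Lemma is_proj_exists : exists z, is_proj X u z.
Proof.
have [d [zs [Hlow Hzs]]] := minimizing_sequence.
have Hclose : forall m l, sqdist (zs m) (zs l) <= 2 * / INR m.+1 + 2 * / INR l.+1.
  move=> m l; rewrite (sqdist_parallelogram u).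
  have := Hlow _ (X_midpoint (proj1 (Hzs m)) (proj1 (Hzs l))).
  by have := proj2 (Hzs m); have := proj2 (Hzs l); lra.
have Hcauchy : forall j, Cauchy_crit (fun m => zs m j).
  move=> j e He.
  have [N HN] : exists N, / INR N.+1 < e * e / 4 by apply: archimed_inv; nra.
  exists N => m l Hm Hl; rewrite /Rdist.
  suff : Rsqr (zs m j - zs l j) < Rsqr e.
    by move/Rsqr_lt_abs_0; rewrite (Rabs_right e) //; lra.
  have := sqdist_coord (zs m) (zs l) j; have := Hclose m l.
  have := inv_INR_le Hm; have := inv_INR_le Hl.
  by rewrite /Rsqr; lra.
pose z j := sval (R_complete _ (Hcauchy j)).
have Hz : forall j, Un_cv (fun m => zs m j) (z j) := fun j => svalP (R_complete _ (Hcauchy j)).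
exists z; split.
  by apply: (@X_closed zs z) => [m|j]; [exact: proj1 (Hzs m)|exact: Hz].
move=> x Hx; apply: Rle_trans _ (Hlow _ Hx).
have Hd := CV_plus _ _ _ _ (cv_cst d) cv_inv_INR; rewrite Rplus_0_r in Hd.
apply: (Rle_cv_lim _ (cv_sqdist u Hz) Hd) => m.
by have := proj2 (Hzs m); lra.
Qed.

End Projection.

Section Polyhedron.
Variables (k m : nat) (A : mat m k) (c : vec m).

Lemma polyhedron_midpoint x y : vle (mv A x) c -> vle (mv A y) c ->
  vle (mv A (fun j => (x j + y j) / 2)) c.
Proof.
move=> Hx Hy i.
have -> : mv A (fun j => (x j + y j) / 2) i = / 2 * mv A x i + / 2 * mv A y i.
  by rewrite /mv -big_lin; apply: eq_bigr => j _; field.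
by have := Hx i; have := Hy i; lra.
Qed.

Lemma polyhedron_closed (zs : nat -> vec k) z :
  (forall l, vle (mv A (zs l)) c) -> (forall j, Un_cv (fun l => zs l j) (z j)) ->
  vle (mv A z) c.
Proof.
move=> Hzs Hz i.
apply: (@Rle_cv_lim (fun l => mv A (zs l) i) (fun _ => c i)) => [l||]; first exact: Hzs.
  by apply: cv_big => j; apply: CV_mult => //; apply: cv_cst.
exact: cv_cst.
Qed.

End Polyhedron.

Lemma proj_spec {k} {X : vec k -> Prop} {u} :
  (exists z, is_proj X u z) -> is_proj X u (proj X u).
Proof. exact: epsilon_spec. Qed.

Lemma proj_polyhedron {k m} (A : mat m k) (c : vec m) u :
  (exists x, vle (mv A x) c) -> vle (mv A (proj (fun x => vle (mv A x) c) u)) c.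
Proof.
move=> Hne; suff Hex : exists z, is_proj (fun x => vle (mv A x) c) u z.
  exact: (proj1 (proj_spec Hex)).
apply: is_proj_exists => //; first exact: polyhedron_midpoint.
exact: polyhedron_closed.
Qed.

(* [proj] picks some nearest point; for [u] in [X] it is unique, at distance 0. *)
Lemma proj_id {k} (X : vec k -> Prop) u : X u -> proj X u = u.
Proof.
move=> Hu.
have Hself : is_proj X u u by split=> // w _; rewrite sqdist_xx; apply: sqdist_ge0.
have [_ Hmin] := proj_spec (ex_intro _ u Hself).
have H0 := Hmin u Hu; rewrite sqdist_xx in H0.
apply: functional_extensionality => j; apply: Rminus_diag_uniq_sym; apply: Rsqr_0_uniq.
by have := sqdist_coord u (proj X u) j; have := Rle_0_sqr (u j - proj X u j); rewrite /Rsqr; lra.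
Qed.

(** * Measurable sets and real functions *)

Lemma IZR_INR_diff (k : Z) : IZR k = INR (Z.to_nat k) - INR (Z.to_nat (- k)).
Proof. by rewrite !INR_IZR_INZ -minus_IZR; f_equal; lia. Qed.

Lemma rational_between {f g a : R} : a < f + g ->
  exists m i j : nat, (INR i - INR j) / INR m.+1 < f /\ a - (INR i - INR j) / INR m.+1 < g.
Proof.
move=> H.
have [m Hm] : exists m, / INR m.+1 < (f + g - a) / 2 by apply: archimed_inv; lra.
set N := INR m.+1 in Hm *.
have HN : 0 < N by apply: lt_0_INR; lia.
have [Hup1 Hup2] := archimed (f * N).
set k := (up (f * N) - 2)%Z.
exists m, (Z.to_nat k), (Z.to_nat (- k)); rewrite -IZR_INR_diff /k minus_IZR.
have -> : (IZR (up (f * N)) - 2) / N = f + (IZR (up (f * N)) - f * N) / N - 2 / N by field; lra.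
have : (IZR (up (f * N)) - f * N) / N <= 1 / N by apply: Rmult_le_compat_r; [apply: Rlt_le; apply: Rinv_0_lt_compat | ]; lra.
have : 0 < (IZR (up (f * N)) - f * N) / N by apply: Rdiv_lt_0_compat; lra.
rewrite /Rdiv; lra.
Qed.

Lemma pred_ext {O : Type} (A B : O -> Prop) : (forall w, A w <-> B w) -> A = B.
Proof.
move=> H; apply: functional_extensionality => w.
exact: propositional_extensionality.
Qed.

Definition rmeasurable {O : Type} (F : (O -> Prop) -> Prop) (f : O -> R) :=
  forall a, F (fun w => f w <= a).

Section SigmaAlgebra.
Context {O : Type} {F : (O -> Prop) -> Prop}.
Hypothesis HF : is_sigma_algebra F.

Lemma sigma_ext {A B : O -> Prop} : F A -> (forall w, A w <-> B w) -> F B.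
Proof. by move=> HA /pred_ext <-. Qed.

Lemma sigmaT : F (fun _ => True).
Proof. by case: HF. Qed.

Lemma sigmaC {A} : F A -> F (fun w => ~ A w).
Proof. by case: HF => _ [H _]; apply: H. Qed.

Lemma sigma_bigcup {An : nat -> O -> Prop} :
  (forall k, F (An k)) -> F (fun w => exists k, An k w).
Proof. by case: HF => _ [_ H]; apply: H. Qed.

Lemma sigma0 : F (fun _ => False).
Proof. by apply: (sigma_ext (sigmaC sigmaT)) => w; tauto. Qed.

Lemma sigma_cst (Q : Prop) : F (fun _ => Q).
Proof.
case: (classic Q) => HQ; [apply: (sigma_ext sigmaT) | apply: (sigma_ext sigma0)]; tauto.
Qed.

Lemma sigmaU {A B} : F A -> F B -> F (fun w => A w \/ B w).
Proof.
move=> HA HB.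
apply: (sigma_ext (@sigma_bigcup (fun k => if k is 0%N then A else B) _)); first by case.
move=> w; split; first by case=> [[|k]]; tauto.
by case=> h; [exists 0%N | exists 1%N].
Qed.

Lemma sigma_bigcap {An : nat -> O -> Prop} :
  (forall k, F (An k)) -> F (fun w => forall k, An k w).
Proof.
move=> H; apply: (sigma_ext (sigmaC (sigma_bigcup (fun k => sigmaC (H k))))) => w.
split; last by move=> h [k]; apply.
by move=> h k; apply: NNPP => h'; apply: h; exists k.
Qed.

Lemma sigmaI {A B} : F A -> F B -> F (fun w => A w /\ B w).
Proof.
move=> HA HB.
apply: (sigma_ext (@sigma_bigcap (fun k => if k is 0%N then A else B) _)); first by case.
by move=> w; split=> [h|[hA hB] [|k]] //; exact: (conj (h 0%N) (h 1%N)).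
Qed.

Lemma sigmaD {A B} : F A -> F B -> F (fun w => A w /\ ~ B w).
Proof. by move=> HA HB; apply: sigmaI => //; apply: sigmaC. Qed.

Lemma sigma_imply (c : Prop) {Q} : (c -> F Q) -> F (fun w => c -> Q w).
Proof.
move=> HQ; case: (classic c) => Hc.
  by apply: (sigma_ext (HQ Hc)) => w; tauto.
by apply: (sigma_ext sigmaT) => w; tauto.
Qed.

Lemma sigma_forall_ord {m} {Q : 'I_m -> O -> Prop} :
  (forall i, F (Q i)) -> F (fun w => forall i, Q i w).
Proof.
move=> H.
have Hk : forall k, F (fun w => forall Hk : (k < m)%N, Q (Ordinal Hk) w).
  move=> k; case: (classic (k < m)%N) => Hk.
    apply: (sigma_ext (H (Ordinal Hk))) => w; split=> [h Hk'|]; last exact.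
    by rewrite (bool_irrelevance Hk' Hk).
  by apply: (sigma_ext sigmaT) => w; split=> // _ Hk'; case: (Hk Hk').
apply: (sigma_ext (sigma_bigcap Hk)) => w; split=> [h [k Hk']|h k Hk']; exact: h.
Qed.

Lemma rmeasurable_gt {f} a : rmeasurable F f -> F (fun w => a < f w).
Proof. by move=> Hf; apply: (sigma_ext (sigmaC (Hf a))) => w; split; lra. Qed.

Lemma rmeasurable_lt {f} a : rmeasurable F f -> F (fun w => f w < a).
Proof.
move=> Hf.
apply: (sigma_ext (@sigma_bigcup (fun k w => f w <= a - / INR k.+1) (fun k => Hf _))).
move=> w; split=> [[k Hk]|Hlt]; first by have := inv_INR_pos k; lra.
have [k Hk] : exists k, / INR k.+1 < a - f w by apply: archimed_inv; lra.
by exists k; lra.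
Qed.

Lemma rmeasurable_ge {f} a : rmeasurable F f -> F (fun w => a <= f w).
Proof. by move=> Hf; apply: (sigma_ext (sigmaC (rmeasurable_lt a Hf))) => w; split; lra. Qed.

Lemma rmeasurable_cst c : rmeasurable F (fun _ => c).
Proof. by move=> a; apply: sigma_cst. Qed.

Lemma rmeasurable_scale c {f} : rmeasurable F f -> rmeasurable F (fun w => c * f w).
Proof.
move=> Hf a.
case: (Rtotal_order c 0) => [Hc|[->|Hc]].
- have Ea : a = c * (a / c) by field; lra.
  apply: (sigma_ext (rmeasurable_ge (a / c) Hf)) => w; rewrite {2}Ea; split=> h; nra.
- by apply: (sigma_ext (rmeasurable_cst 0 a)) => w; rewrite Rmult_0_l.
- have Ea : a = c * (a / c) by field; lra.
  apply: (sigma_ext (Hf (a / c))) => w; rewrite {2}Ea; split=> h; nra.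
Qed.

(* [{a < f + g}] is the union over rationals [q] of [{q < f} /\ {a - q < g}]. *)
Lemma rmeasurable_plus {f g} : rmeasurable F f -> rmeasurable F g -> rmeasurable F (fun w => f w + g w).
Proof.
move=> Hf Hg a.
pose q m i j := (INR i - INR j) / INR m.+1.
have Hsep : F (fun w => exists m i j, q m i j < f w /\ a - q m i j < g w).
  do 3!(apply: sigma_bigcup => ?).
  by apply: sigmaI; [apply: rmeasurable_gt | apply: rmeasurable_gt].
apply: (sigma_ext (sigmaC Hsep)) => w; split=> [Hnot|Hle [m [i [j]]]]; last lra.
apply: Rnot_lt_le => Hlt; apply: Hnot.
by have [m [i [j Hq]]] := rational_between Hlt; exists m, i, j.
Qed.

Lemma rmeasurable_big {I : eqType} (r : seq I) (P : pred I) (G : I -> O -> R) :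
  (forall i, i \in r -> rmeasurable F (G i)) ->
  rmeasurable F (fun w => \big[Rplus/R0]_(i <- r | P i) G i w).
Proof.
elim: r => [|x r IH] H.
  by move=> a; apply: (sigma_ext (rmeasurable_cst 0 a)) => w; rewrite big_nil.
have Hr : rmeasurable F (fun w => \big[Rplus/R0]_(i <- r | P i) G i w).
  by apply: IH => i hi; apply: H; rewrite inE hi orbT.
move=> a; case Px: (P x).
  by apply: (sigma_ext (rmeasurable_plus (H x (mem_head _ _)) Hr a)) => w; rewrite big_cons Px.
by apply: (sigma_ext (Hr a)) => w; rewrite big_cons Px.
Qed.

End SigmaAlgebra.

(** * Probabilities *)

Lemma sum_f_R0_cst (c : R) k : sum_f_R0 (fun _ => c) k = INR k.+1 * c.
Proof.
elim: k => [|k IH] /=; first lra.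
by rewrite IH; have := S_INR k.+1; simpl; lra.
Qed.

Section Probability.
Context {O : Type} {F : (O -> Prop) -> Prop} {P : (O -> Prop) -> R}.
Hypothesis HP : is_probability F P.

Let HF : is_sigma_algebra F := proj1 HP.

Lemma probability_ge0 {A} : F A -> 0 <= P A.
Proof. by case: HP => _ [_ [H _]]; apply: H. Qed.

Lemma probability0 : P (fun _ => False) = 0.
Proof.
case: HP => _ [_ [_ Hadd]].
have := Hadd (fun _ _ => False) (fun _ => sigma0 HF) (fun _ _ _ _ h _ => h).
have -> : (fun w : O => exists k : nat, False) = (fun _ => False) by apply: pred_ext => w; split=> // [[]].
set e := P _ => Hsum.
(* The partial sums [(k + 1) e] can only converge to [e] if [e = 0]. *)
suff: Rabs e <= 0 by have := Rabs_pos e; split_Rabs; lra.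
apply: Rnot_lt_le => He; have [N HN] := Hsum _ He.
have := HN N.+1 (Nat.le_succ_diag_r N); rewrite sum_f_R0_cst /Rdist.
have -> : INR N.+2 * e - e = INR N.+1 * e by rewrite [INR N.+2]S_INR; ring.
rewrite Rabs_mult Rabs_right; last by apply: Rle_ge; apply: pos_INR.
have : 1 <= INR N.+1 by apply: (le_INR 1); lia.
nra.
Qed.

Lemma probabilityU {A B} : F A -> F B -> (forall w, A w -> B w -> False) ->
  P (fun w => A w \/ B w) = P A + P B.
Proof.
move=> HA HB Hdisj.
case: HP => _ [_ [_ Hadd]].
pose S k := match k with 0%N => A | 1%N => B | _ => fun _ : O => False end.
have HS : forall k, F (S k) by case=> [|[|k]] //=; apply: sigma0.
have HSdisj : forall k l w, k <> l -> S k w -> S l w -> False.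
  by case=> [|[|k]] [|[|l]] w //= => _ *; [apply: (Hdisj w) | apply: (Hdisj w)].
have Hsum : infinite_sum (fun k => P (S k)) (P A + P B).
  move=> e He; exists 1%N => [[|k]] Hk; first lia.
  suff -> : sum_f_R0 (fun k => P (S k)) k.+1 = P A + P B by rewrite /Rdist Rminus_diag Rabs_R0.
  by elim: k {Hk} => [|k /= ->] /=; rewrite ?probability0; ring.
rewrite -(uniqueness_sum _ _ _ (Hadd S HS HSdisj) Hsum).
by congr P; apply: pred_ext => w; split=> [[h|h]|[[|[|k]] /=]]; try tauto; [exists 0%N | exists 1%N].
Qed.

Lemma le_probability {A B} : F A -> F B -> (forall w, A w -> B w) -> P A <= P B.
Proof.
move=> HA HB H.
have -> : P B = P (fun w => A w \/ (B w /\ ~ A w)).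
  congr P; apply: pred_ext => w; split; last by case=> [/H|[]].
  by move=> hb; case: (classic (A w)) => h; [left | right].
rewrite (probabilityU HA (sigmaD HF HB HA)) => [|w ? []] //.
by have := probability_ge0 (sigmaD HF HB HA); lra.
Qed.

Lemma le_probability_null {A E N} : F A -> F E -> F N -> P N = 0 ->
  (forall w, A w -> E w \/ N w) -> P A <= P E.
Proof.
move=> HA HE HN PN H.
have HND := sigmaD HF HN HE.
have HU := probabilityU HE HND (fun w h1 h2 => proj2 h2 h1).
have : P A <= P (fun w => E w \/ (N w /\ ~ E w)).
  apply: le_probability => //; first exact: sigmaU.
  by move=> w /H [h|h]; [left | case: (classic (E w)) => h'; [left | right]].
have : P (fun w => N w /\ ~ E w) <= P N by apply: le_probability => // w [].
lra.
Qed.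

End Probability.

Lemma borel_sigma k : is_sigma_algebra (@borel k).
Proof.
split; first by move=> S [HS _] _.
split; first by move=> A HA S HS Hgen; apply: (sigmaC HS); apply: HA.
by move=> An HA S HS Hgen; apply: (sigma_bigcup HS) => k'; apply: HA.
Qed.

Lemma borel_preimage {k m} (phi : vec k -> vec m) :
  (forall i a, borel (fun v => phi v i <= a)) ->
  forall B, borel B -> borel (fun v => B (phi v)).
Proof.
have Hs := borel_sigma k.
move=> Hgen B HB; apply: (HB (fun B => borel (fun v => B (phi v)))) => //.
split; first exact: sigmaT Hs.
by split=> [A|An]; [apply: sigmaC | apply: sigma_bigcup].
Qed.

Lemma borel_ext_le k i a : borel (fun v : vec k => ext v i <= a).
Proof. by rewrite /ext; case: (insub i) => [j S _|]; [apply | exact: (sigma_cst (borel_sigma k))]. Qed.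

(** * The projection operator Pi *)

Lemma ext_lt {k} (v : vec k) i (Hi : (i < k)%N) : ext v i = v (Ordinal Hi).
Proof. by rewrite /ext insubT. Qed.

Lemma ext_ge {k} (v : vec k) i : ~~ (i < k)%N -> ext v i = 0.
Proof. by move=> H; rewrite /ext insubF //; apply/negbTE. Qed.

Lemma restr_ext {k} (v : vec k) : restr (ext v) = v.
Proof.
apply: functional_extensionality => j; rewrite /restr (ext_lt v _ (ltn_ord j)).
by congr v; apply: val_inj.
Qed.

Lemma ext_hist_lt M k s i : (i < M * k)%N -> ext (@hist M k s) i = s i.
Proof. by move=> H; rewrite (ext_lt _ _ H). Qed.

Lemma trunc_ext_hist M j k s : (j <= k)%N ->
  trunc (M * j) (ext (@hist M k s)) = ext (@hist M j s).
Proof.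
move=> H; apply: functional_extensionality => i; rewrite /trunc.
case: (boolP (i < M * j)%N) => Hi; last by rewrite ext_ge.
by rewrite !ext_hist_lt // (leq_trans Hi) // leq_mul2l H orbT.
Qed.

Lemma blk_index_lt M t tau (l : 'I_M) : (1 <= tau <= t)%N -> (M * (tau - 1) + l < M * t)%N.
Proof.
move=> /andP [H1 H2]; apply: (@leq_trans (M * tau)); last by rewrite leq_mul2l H2 orbT.
by rewrite -[X in (_ <= M * X)%N](subnK H1) mulnDr muln1 ltn_add2l.
Qed.

Lemma blk_trunc M t tau g : (1 <= tau <= t)%N -> @blk M tau (trunc (M * t) g) = @blk M tau g.
Proof.
by move=> Ht; apply: functional_extensionality => l; rewrite /blk /trunc blk_index_lt.
Qed.

Lemma blk_ext_hist M k tau s : (1 <= tau <= k)%N -> @blk M tau (ext (@hist M k s)) = @blk M tau s.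
Proof.
by move=> Ht; apply: functional_extensionality => l; rewrite /blk ext_hist_lt // blk_index_lt.
Qed.

Lemma PiRec_le {M n} (D : Data M n) y t tau h : (tau <= t)%N ->
  PiRec D y t tau h = PiRec D y tau tau h.
Proof.
elim: t => [|t IH] Ht; first by move: Ht; rewrite leqn0 => /eqP ->.
rewrite /=; case: (boolP (tau <= t)%N) => H; first by rewrite IH.
have -> : tau = t.+1 by apply/eqP; rewrite eqn_leq Ht ltnNge.
by rewrite /= ltnn.
Qed.

Lemma Xset_congr {M n} (D : Data M n) t (zs zs' : forall tau, vec (n tau)) h h' :
  (forall tau, (1 <= tau < t)%N -> zs tau = zs' tau) ->
  (forall tau, (1 <= tau < t)%N -> @blk M tau h = @blk M tau h') ->
  Xset D t zs h = Xset D t zs' h'.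
Proof.
move=> Hz Hb.
have EB : forall i, vsum 1 t (fun tau => mv (B3 D t tau) (@blk M tau h)) i
                  = vsum 1 t (fun tau => mv (B3 D t tau) (@blk M tau h')) i.
  by move=> i; apply: eq_big_nat => tau /Hb ->.
have EA : forall i, vsum 1 t (fun tau => mv (A3 D t tau) (zs tau)) i
                  = vsum 1 t (fun tau => mv (A3 D t tau) (zs' tau)) i.
  by move=> i; apply: eq_big_nat => tau /Hz ->.
by apply: pred_ext => u; split=> H i; have := H i; rewrite EA EB.
Qed.

Lemma yval_Pi {M n} (D : Data M n) y t s : (1 <= t)%N ->
  yval (Pi D y) t s = proj (Xset D t (fun tau => yval (Pi D y) tau s) s) (yval y t s).
Proof.
case: t => [//|t] _.
rewrite /yval /Pi [PiRec D y t.+1 t.+1 _]/= ltnn restr_ext.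
rewrite /hist restr_ext -/(@hist M _ s).
congr proj; apply: Xset_congr => tau /andP [H1 H2].
  by rewrite PiRec_le // trunc_ext_hist // leq_sub2r // ltnW.
by rewrite blk_trunc ?blk_ext_hist // H1 ?subn1 // ltnW.
Qed.

Lemma stage3_iff_Xset {M n} (D : Data M n) (y : policy_t M n) t s : (1 <= t)%N ->
  vle (vplus (vsum 1 t.+1 (fun tau => mv (A3 D t tau) (yval y tau s)))
             (vsum 1 t (fun tau => mv (B3 D t tau) (@blk M tau s))))
      (b3 D t)
  <-> Xset D t (fun tau => yval y tau s) s (yval y t s).
Proof.
move=> Ht; rewrite /vle /vplus /Xset /vsum.
by split=> H i; have := H i; rewrite big_nat_recr //=; lra.
Qed.

Section Projected.
Variables (T M : nat) (n : nat -> nat) (D : Data M n).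
Hypothesis Hne : forall t, (1 <= t <= T)%N ->
  forall (zs : forall tau, vec (n tau)) (h : nat -> R), exists u, Xset D t zs h u.

Lemma C3_Pi (y : policy_t M n) s : C3 T D (Pi D y) s.
Proof.
move=> t Ht; have Ht1 : (1 <= t)%N by case/andP: Ht.
apply/(stage3_iff_Xset D _ _ _ Ht1); rewrite {1}yval_Pi //.
move: (Hne _ Ht (fun tau => yval (Pi D y) tau s) s); rewrite /Xset.
exact: proj_polyhedron.
Qed.

End Projected.

Lemma yval_Pi_id {T M n} (D : Data M n) (y : policy_t M n) s :
  C3 T D y s -> forall t, (1 <= t <= T)%N -> yval (Pi D y) t s = yval y t s.
Proof.
move=> HC.
suff H : forall N t, (t <= N)%N -> (1 <= t <= T)%N -> yval (Pi D y) t s = yval y t s.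
  by move=> t; apply: H (leqnn t).
elim=> [|N IH] t HtN Ht; first by case/andP: Ht; rewrite leqn0 in HtN; rewrite (eqP HtN).
have [Ht1 HtT] := andP Ht.
rewrite yval_Pi // (Xset_congr D t _ (fun tau => yval y tau s) _ s) //.
  by apply: proj_id; apply/(stage3_iff_Xset D _ _ _ Ht1); apply: HC.
move=> tau /andP [H1 H2]; apply: IH; first by rewrite -ltnS (leq_trans H2).
by rewrite H1 (leq_trans (ltnW H2)).
Qed.

Lemma C2_congr {T M n} (D : Data M n) (y1 y2 : policy_t M n) s :
  (forall tau, (1 <= tau <= T)%N -> yval y1 tau s = yval y2 tau s) ->
  C2 T D y1 s -> C2 T D y2 s.
Proof.
move=> Hy H t Ht.
suff <- : vsum 1 t.+1 (fun tau => mv (A2 D t tau) (yval y1 tau s))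
        = vsum 1 t.+1 (fun tau => mv (A2 D t tau) (yval y2 tau s)) by apply: H.
apply: functional_extensionality => i; apply: eq_big_nat => tau /andP [H1 H2].
by rewrite Hy // H1 -ltnS (leq_trans H2) //; case/andP: Ht.
Qed.

Section Chance.
Context {T M : nat} {n : nat -> nat} (D : Data M n).
Context {Omega : Type} {F : (Omega -> Prop) -> Prop} {P : (Omega -> Prop) -> R}.
Context (xi : Omega -> vec (M * T)%N) (p : R).
Hypothesis HP : is_probability F P.
Hypothesis Hxi : random_vector F xi.

Let HF : is_sigma_algebra F := proj1 HP.

Lemma rmeasurable_yval (y : policy_t M n) tau j : is_policy T y -> (1 <= tau <= T)%N ->
  rmeasurable F (fun w => yval y tau (sample xi w) j).
Proof.
move=> Hy Ht a; apply: (Hxi (fun v => y tau (@hist M (tau - 1) (ext v)) j <= a)).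
apply: (borel_preimage (fun v : vec (M * T) => @hist M (tau - 1) (ext v)) _
          (fun h => y tau h j <= a)) => [i b|]; first exact: borel_ext_le.
by apply: (Hy tau Ht (fun h => h j <= a)) => S _; apply.
Qed.

Lemma rmeasurable_blk tau l : rmeasurable F (fun w => @blk M tau (sample xi w) l).
Proof. by move=> a; apply: (Hxi (fun v => ext v (M * (tau - 1) + l)%N <= a)); apply: borel_ext_le. Qed.

(* Both groups of constraints have this shape: (2) with [hi t = t.+1], (3) with [hi t = t]. *)
Lemma sigma_stagewise_constraints {m : nat -> nat} (A : forall t tau, mat (m t) (n tau))
  (B : forall t tau, mat (m t) M) (b : forall t, vec (m t)) (hi : nat -> nat)
  (y : policy_t M n) : is_policy T y ->
  F (fun w => forall t, (1 <= t <= T)%N ->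
       vle (vplus (vsum 1 t.+1 (fun tau => mv (A t tau) (yval y tau (sample xi w))))
                  (vsum 1 (hi t) (fun tau => mv (B t tau) (@blk M tau (sample xi w)))))
           (b t)).
Proof.
move=> Hy; apply: (sigma_bigcap HF) => t; apply: (sigma_imply HF) => Ht.
apply: (sigma_forall_ord HF) => i; apply: (rmeasurable_plus HF).
  apply: (rmeasurable_big HF) => tau; rewrite mem_index_iota => /andP [H1 H2].
  apply: (rmeasurable_big HF) => j _; apply: (rmeasurable_scale HF).
  by apply: rmeasurable_yval => //; rewrite H1 -ltnS (leq_trans H2) //; case/andP: Ht.
apply: (rmeasurable_big HF) => tau _; apply: (rmeasurable_big HF) => j _.
exact: (rmeasurable_scale HF) (rmeasurable_blk _ _).
Qed.

Lemma sigma_C2 {y} : is_policy T y -> F (fun w => C2 T D y (sample xi w)).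
Proof. exact: (sigma_stagewise_constraints (A2 D) (B2 D) (b2 D) S). Qed.

Lemma sigma_C3 {y} : is_policy T y -> F (fun w => C3 T D y (sample xi w)).
Proof. exact: (sigma_stagewise_constraints (A3 D) (B3 D) (b3 D) id). Qed.

Lemma M1_M2_ae_eq y : @M1 T M n D Omega F P xi p y ->
  @M2 T M n D Omega P xi p y /\ @ae_eq T M n Omega F P xi y (Pi D y).
Proof.
move=> [Hy [Hp [N [HN [PN HC]]]]].
have H2 := sigma_C2 Hy; have H23 := sigmaI HF H2 (sigma_C3 Hy).
split.
  split=> //; apply: Rge_trans Hp; apply: Rle_ge; apply: (le_probability_null HP H2 H23 HN PN).
  by move=> w h; case: (classic (N w)) => hN; [right | left; split=> //; apply: HC].
exists N; split=> //; split=> // w hN t Ht i.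
by rewrite (yval_Pi_id D y _ (HC w hN) t Ht).
Qed.

Lemma Pi_M2_M1
  (Hne : forall t, (1 <= t <= T)%N ->
           forall (zs : forall tau, vec (n tau)) (h : nat -> R), exists u, Xset D t zs h u)
  (HPi : forall y, is_policy T y -> is_policy T (Pi D y)) y :
  @M2 T M n D Omega P xi p y -> @M1 T M n D Omega F P xi p (Pi D y).
Proof.
move=> [Hy Hp]; have Hz := HPi y Hy.
split=> //; split.
  apply: Rge_trans Hp; apply: Rle_ge.
  apply: (le_probability HP (sigmaI HF (sigma_C2 Hy) (sigma_C3 Hy)) (sigma_C2 Hz)).
  move=> w [h2 h3]; apply: (C2_congr D y) h2 => tau Ht.
  by rewrite (yval_Pi_id D y _ h3 tau Ht).
exists (fun _ => False); split; first exact: sigma0 HF.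
by split; [exact: probability0 HP | move=> w _; apply: C3_Pi].
Qed.

End Chance.

Theorem lemma2p1
  (T M : nat) (n : nat -> nat) (D : Data M n)
  (Omega : Type) (F : (Omega -> Prop) -> Prop) (P : (Omega -> Prop) -> R)
  (xi : Omega -> vec (M * T)%N) (p : R)
  (HT : (2 <= T)%N) (HM : (1 <= M)%N)
  (Hn : forall t, (1 <= t <= T)%N -> (1 <= n t)%N)
  (HP : is_probability F P) (Hxi : random_vector F xi)
  (Hp : 0 < p <= 1)
  (HB3 : forall t i j, B3 D t t i j = 0)
  (Hne : forall t, (1 <= t <= T)%N ->
           forall (zs : forall tau, vec (n tau)) (h : nat -> R),
           exists u, Xset D t zs h u)
  (HPi : forall y, is_policy T y -> is_policy T (Pi D y))
  (K : policy_t M n -> Prop) (HK : forall y, K y -> is_policy T y) :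
  (forall y, @M1 T M n D Omega F P xi p y /\ K y ->
     exists y', (@M2 T M n D Omega P xi p y' /\ K y') /\
                @ae_eq T M n Omega F P xi y (Pi D y'))
  /\
  (forall z, (exists y, (@M2 T M n D Omega P xi p y /\ K y) /\ z = Pi D y) ->
     @M1 T M n D Omega F P xi p z /\ (exists y, K y /\ z = Pi D y))
  /\
  (forall z, @M1 T M n D Omega F P xi p z /\ (exists y, K y /\ z = Pi D y) ->
     @M1 T M n D Omega F P xi p z)
  /\
  ((forall z, (exists y, @M2 T M n D Omega P xi p y /\ z = Pi D y) ->
      @M1 T M n D Omega F P xi p z)
   /\
   (forall y, @M1 T M n D Omega F P xi p y ->
      exists y', @M2 T M n D Omega P xi p y' /\
                 @ae_eq T M n Omega F P xi y (Pi D y'))).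
Proof.
have M1_M2 := M1_M2_ae_eq D xi p HP Hxi.
have M2_M1 := Pi_M2_M1 D xi p HP Hxi Hne HPi.
split; first by move=> y [/M1_M2 [H2 Hae] Ky]; exists y.
split; first by move=> _ [y [[/M2_M1 H1 Ky] ->]]; split=> //; exists y.
split; first by move=> z [].
split; first by move=> _ [y [/M2_M1 H1 ->]].
by move=> y /M1_M2 H; exists y.
Qed.
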